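(* Let $X=\mathbb{P}^G(w_1,w_2,w_3)$ be a fake weighted projective plane with $\gcd(w_1,w_2,w_3)=1$, and let $d\ge1$ be the degree of a curve class (so $\mathsf d\cdot D_k=w_kd$). Then $\mathrm T(\mathfrak q)^X_{\mathsf d}$ has a unique element, and its multiplicity is $|G|\,w_1w_2w_3\,d^2$.
   Context: $\mathbb P^G(w_1,w_2,w_3)$ is the toric variety of the complete fan in $N_{\mathbb R}$, $N\cong\mathbb Z^2$, with rays $[D_1],[D_2],[D_3]$ spanned by primitive $\Delta(1),\Delta(2),\Delta(3)$ with $\sum w_k\Delta(k)=0$, and $G=N/L$, $L$ the sublattice generated by the $\Delta(k)$. $M=\mathrm{Hom}(N,\mathbb Z)$. A genus $0$ degree $\mathsf d$ maximally tangent marked tropical curve in $X$ is (an isomorphism class of) a pair $(\Gamma,h)$: $\Gamma$ a finite tree with some univalent vertices removed, no univalent or bivalent vertices, edge weights $w:\Gamma^{[1]}\to\mathbb Z_{\ge0}$; weight-$0$ non-compact edges are interior markings $P_1,P_2$, and there is exactly one positive-weight non-compact edge (exterior marking) for each toric divisor $D_j$; $h:\Gamma\to N_{\mathbb R}$ proper continuous, constant on an edge iff weight $0$, otherwise an embedding onto a segment of a rational-slope line; balancing $\sum_{E\ni V}w(E)u_{(V,E)}=0$ at every vertex; the exterior marking of $D_j$ is parallel to $[D_j]$ (direction $\Delta(j)$) with weight $\mathsf d\cdot D_j$. An interior marking satisfies a $\psi^k$-condition if its vertex is incident to exactly $k+2$ positive-weight edges. $\mathrm T(\mathfrak q)^X_{\mathsf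 d}$ is the set of such curves with $P_1,P_2$ mapped to two fixed general points of $N_{\mathbb R}$, $P_2$ satisfying a $\psi^{r_X-1}$-condition ($r_X$ the Picard rank; here $r_X=1$, so $\psi^0$). Multiplicity: $A=\mathbb Z[N]\otimes\Lambda^\bullet M$ with product $z^n\alpha\cdot z^{n'}\beta=z^{n+n'}\alpha\wedge\beta$ and $\ell_k(z^{n_1}\alpha_1\otimes\cdots\otimes z^{n_k}\alpha_k)=z^{\sum n_i}\iota_{\sum n_i}(\alpha_1\wedge\cdots\wedge\alpha_k)$. Choose a sink vertex $V_\infty$, orient toward it; $\zeta_E=z^{w(E)\Delta(j)}$ for the exterior marking of $D_j$, $\zeta_P$ a generator of $\Lambda^{\dim N}M$ for interior markings, $\zeta_{E_{out}}=\ell_k(\zeta_{E_1}\otimes\cdots\otimes\zeta_{E_k})$ at a vertex $V\neq V_\infty$ with incoming $E_1,\dots,E_k$; $\zeta_\Gamma=\prod_{E\ni V_\infty}\zeta_E\in z^0\otimes\Lambda^{\dim N}M$ and $\mathrm{Mult}(\Gamma)$ is its index in $\Lambda^{\dim N}M$. *)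

(* Tropical curves in N_R = R^2 with R an arbitrary real field,
   lattice N = M = Z^2 (int * int). *)
From HB Require Import structures.
From mathcomp Require Import all_boot all_order all_algebra.
Set Implicit Arguments. Unset Strict Implicit. Unset Printing Implicit Defensive.
Import Order.TTheory GRing.Theory Num.Theory.
Local Open Scope ring_scope.

Definition lat := (int * int)%type.
Definition lzero : lat := (0, 0).
Definition ladd (x y : lat) : lat := (x.1 + y.1, x.2 + y.2).
Definition lscale (k : int) (x : lat) : lat := (k * x.1, k * x.2).
Definition lsum (s : seq lat) : lat := foldr ladd lzero s.
Definition primitive (x : lat) : bool := gcdn (absz x.1) (absz x.2) == 1%N.
Definition det2 (a b : lat) : int := a.1 * b.2 - a.2 * b.1.

(* the sublattice L generated by the Delta(k), and |G| = |N/L| *)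
Definition inL (D : 'I_3 -> lat) (x : lat) : Prop :=
  exists c : 'I_3 -> int, x = lsum [seq lscale (c k) (D k) | k <- enum 'I_3].
(* g is the order of G = N/L: 'I_g indexes a complete system of representatives *)
Definition orderG (D : 'I_3 -> lat) (g : nat) : Prop :=
  exists reps : 'I_g -> lat,
    (forall i j, inL D (ladd (reps i) (lscale (-1) (reps j))) -> i = j) /\
    (forall x, exists i, inL D (ladd x (lscale (-1) (reps i)))).

Definition weight_relation (w : 'I_3 -> nat) (D : 'I_3 -> lat) : Prop :=
  lsum [seq lscale (w k)%:Z (D k) | k <- enum 'I_3] = lzero.
(* nondegeneracy: the rays span N_R (with the positive relation this is
   equivalent to the three cones forming a complete fan) *)
Definition rays_span (D : 'I_3 -> lat) : Prop :=
  det2 (D ord0) (D (lift ord0 ord0)) != 0.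

(* ---------- Lambda^* M for M of rank 2: degrees 0,1,2 ---------- *)
Record lam := Lam { l0 : int; l1 : lat; l2 : int }.
(* l2 is the coefficient of the generator e1^* /\ e2^* *)
Definition wedge (a b : lam) : lam :=
  Lam (l0 a * l0 b)
      (ladd (lscale (l0 a) (l1 b)) (lscale (l0 b) (l1 a)))
      (l0 a * l2 b + l0 b * l2 a + det2 (l1 a) (l1 b)).
Definition contract (n : lat) (a : lam) : lam :=
  Lam ((l1 a).1 * n.1 + (l1 a).2 * n.2) (lscale (l2 a) (- n.2, n.1)) 0.
Definition lam1 : lam := Lam 1 lzero 0.
Definition vol : lam := Lam 0 lzero 1.

(* monomials z^n (x) alpha of A = Z[N] (x) Lambda^* M; products and the
   brackets l_k of monomials are monomials *)
Definition mono := (lat * lam)%type.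
Definition mprod (s : seq mono) : mono :=
  (lsum (map fst s), foldr wedge lam1 (map snd s)).
Definition ell (s : seq mono) : mono :=
  let n := lsum (map fst s) in (n, contract n (foldr wedge lam1 (map snd s))).

(* the five non-compact edges: inl i = interior marking P_(i+1),
   inr j = exterior marking of D_(j+1) *)
Notation leg := ('I_2 + 'I_3)%type.
Definition mP1 : leg := inl ord0.
Definition mP2 : leg := inl ord_max.
Definition leg_w (w : 'I_3 -> nat) (d : nat) (l : leg) : nat :=
  match l with inl _ => 0%N | inr j => (d * w j)%N end.
Definition leg_u (D : 'I_3 -> lat) (l : leg) : lat :=
  match l with inl _ => lzero | inr j => D j end.

Record tcurve (R : Type) := TCurve {
  tV : finType;
  tE : finType;
  tsrc : tE -> tV;
  ttgt : tE -> tV;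
  tw : tE -> nat;
  tu : tE -> lat;               (* primitive direction from tsrc to ttgt *)
  tpos : tV -> R * R;
  tleg : leg -> tV
}.

Section Curves.
Variable R : realFieldType.
Variable C : tcurve R.

Definition incid (e : tE C) (v : tV C) : bool := (tsrc e == v) || (ttgt e == v).
Definition tadj : rel (tV C) := fun a b =>
  [exists e : tE C, ((tsrc e == a) && (ttgt e == b)) || ((tsrc e == b) && (ttgt e == a))].
Definition is_tree : bool :=
  [forall e : tE C, tsrc e != ttgt e] && (#|tE C|.+1 == #|tV C|)%N &&
  [forall a : tV C, forall b : tV C, connect tadj a b].
Definition valence (v : tV C) : nat :=
  (#|[pred e : tE C | incid e v]| + #|[pred l : leg | tleg C l == v]|)%N.
Definition other (e : tE C) (v : tV C) : tV C := if tsrc e == v then ttgt e else tsrc e.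

Definition edge_ok (e : tE C) : Prop :=
  if tw e == 0%N then tpos (ttgt e) = tpos (tsrc e)
  else primitive (tu e) /\
       exists t : R, 0 < t /\
         tpos (ttgt e) = ((tpos (tsrc e)).1 + t * (tu e).1%:~R,
                          (tpos (tsrc e)).2 + t * (tu e).2%:~R).

Definition flux (D : 'I_3 -> lat) (w : 'I_3 -> nat) (d : nat) (v : tV C) : lat :=
  ladd (lsum [seq lscale (tw e)%:Z (if tsrc e == v then tu e else lscale (-1) (tu e))
             | e <- enum (tE C) & incid e v])
       (lsum [seq lscale (leg_w w d l)%:Z (leg_u D l) | l <- enum {: leg} & tleg C l == v]).

Definition pos_valence (w : 'I_3 -> nat) (d : nat) (v : tV C) : nat :=
  (#|[pred e : tE C | incid e v && (0 < tw e)%N]| +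
   #|[pred l : leg | (tleg C l == v) && (0 < leg_w w d l)%N]|)%N.

Definition leg_zeta (D : 'I_3 -> lat) (w : 'I_3 -> nat) (d : nat) (l : leg) : mono :=
  match l with inl _ => (lzero, vol) | inr j => (lscale (d * w j)%N%:Z (D j), lam1) end.

Fixpoint zeta_from D w d (k : nat) (v : tV C) (par : tE C) {struct k} : mono :=
  match k with
  | 0 => (lzero, lam1)
  | k'.+1 =>
      ell ([seq leg_zeta D w d l | l <- enum {: leg} & tleg C l == v] ++
           [seq zeta_from D w d k' (other e v) e | e <- enum (tE C) & incid e v && (e != par)])
  end.

Definition zeta_sink D w d (s : tV C) : mono :=
  mprod ([seq leg_zeta D w d l | l <- enum {: leg} & tleg C l == s] ++
         [seq zeta_from D w d #|tV C| (other e s) e | e <- enum (tE C) & incid e s]).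
End Curves.

(* zeta lies in z^0 (x) Lambda^2 M and has index m there *)
Definition has_index (z : mono) (m : nat) : Prop :=
  z.1 = lzero /\ l0 z.2 = 0 /\ l1 z.2 = lzero /\ absz (l2 z.2) = m.

(* membership in T(q)^X_d, with P1, P2 mapped to p1, p2, P2 with a psi^0 condition *)
Definition in_Tq (R : realFieldType) (D : 'I_3 -> lat) (w : 'I_3 -> nat) (d : nat)
    (p1 p2 : R * R) (C : tcurve R) : Prop :=
  is_tree C /\
  (forall v : tV C, 3 <= valence v)%N /\
  (forall e : tE C, edge_ok e) /\
  (forall v : tV C, flux D w d v = lzero) /\
  tpos (tleg C mP1) = p1 /\ tpos (tleg C mP2) = p2 /\
  pos_valence w d (tleg C mP2) = 2%N.

Definition tc_iso (R : Type) (C C' : tcurve R) : Prop :=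
  exists (f : tV C -> tV C') (g : tE C -> tE C'),
    bijective f /\ bijective g /\
    (forall e, (tsrc (g e) = f (tsrc e) /\ ttgt (g e) = f (ttgt e)) \/
               (tsrc (g e) = f (ttgt e) /\ ttgt (g e) = f (tsrc e))) /\
    (forall e, tw (g e) = tw e) /\
    (forall v, tpos (f v) = tpos v) /\
    (forall l, tleg C' l = f (tleg C l)).

(* genericity: (p1,p2) avoids finitely many proper affine hyperplanes of N_R^2 *)
Record hyperplane (R : Type) := Hyp { hA : R * R; hB : R * R; hc : R }.
Definition hyp_proper (R : realFieldType) (H : hyperplane R) : Prop :=
  (hA H, hB H) <> ((0, 0), (0, 0)).
Definition off_hyp (R : realFieldType) (H : hyperplane R) (p1 p2 : R * R) : Prop :=
  (hA H).1 * p1.1 + (hA H).2 * p1.2 + (hB H).1 * p2.1 + (hB H).2 * p2.2 <> hc H.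

(* Prop-valued membership in a sequence (no eqType needed) *)
Fixpoint In_seq (T : Type) (x : T) (s : seq T) : Prop :=
  match s with [::] => False | y :: s' => x = y \/ In_seq x s' end.

(* The rays satisfy [det(D_i, D_(i+1)) = w_(i+2) del] for one nonzero integer
   [del] (the weights being coprime), and [|G| = |del|] because the sublattice
   they span is the kernel of [x |-> det(D_0, x) mod del].  For [p2 - p1] off
   the three lines [R D_j], there is a unique ordered pair of rays [(a, b)]
   and unique [s, t > 0] with [p2 - p1 = t D_b - s D_a]; this is decoded from
   the signs of [det(p2 - p1, D_j)] using the weight relation.  The curve is
   the tripod with sink [q = p1 - s D_a] and legs to [p1] and [p2] along
   [D_a] and [D_b], the third marking at [q]; its multiplicity is
   [(d w_a)(d w_b) |det(D_a, D_b)| = |del| w_0 w_1 w_2 d^2] for any sink.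
   Conversely, counting valences bounds a curve of [T(q)] to two edges, and
   balancing at leaves rules out every shape but a tripod, whose data is then
   a cone representation of [p2 - p1], hence the one above. *)

From HB Require Import structures.
From mathcomp Require Import all_boot all_order all_algebra.
From mathcomp Require Import ring lra zify.
Import Order.TTheory GRing.Theory Num.Theory.
Local Open Scope ring_scope.
Set Implicit Arguments. Unset Strict Implicit. Unset Printing Implicit Defensive.

Definition i0 : 'I_3 := ord0.
Definition i1 : 'I_3 := lift ord0 ord0.
Definition i2 : 'I_3 := ord_max.

Lemma ord3P (j : 'I_3) : j = i0 \/ j = i1 \/ j = i2.
Proof.
by case: j => [[|[|[|m]]] Hj]; [left | right; left | right; right | ];
  rewrite // /i0 /i1 /i2; apply: val_inj.
Qed.

Lemma ord2P (e : 'I_2) : e = ord0 \/ e = ord_max.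
Proof. by case: e => [[|[|m]] He]; [left | right | ]; rewrite //; apply: val_inj. Qed.

Lemma cover3 (a b c : 'I_3) : a != b -> a != c -> b != c ->
  forall j, j = a \/ j = b \/ j = c.
Proof.
move=> ab ac bc j.
have [Ea|[Ea|Ea]] := ord3P a; have [Eb|[Eb|Eb]] := ord3P b;
  have [Ec|[Ec|Ec]] := ord3P c; subst a b c; try by [];
  have [->|[->|->]] := ord3P j; auto.
Qed.

Lemma enum3 : enum 'I_3 = [:: i0; i1; i2].
Proof. by apply: (inj_map val_inj); rewrite val_enum_ord. Qed.

Lemma enumI2 : enum 'I_2 = [:: ord0; ord_max].
Proof. by apply: (inj_map val_inj); rewrite val_enum_ord. Qed.

Lemma enum_leg : enum {: leg} = [:: inl ord0; inl ord_max; inr i0; inr i1; inr i2].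
Proof. by rewrite enumT unlock /= /sum_enum -!enumT enumI2 enum3. Qed.

Lemma sum2 (F : 'I_2 -> int) : \sum_(e < 2) F e = F ord0 + F ord_max.
Proof. by rewrite -big_enum /= enumI2 !big_cons big_nil addr0. Qed.

Lemma sum3 (F : 'I_3 -> int) : \sum_(j < 3) F j = F i0 + F i1 + F i2.
Proof. by rewrite -big_enum /= enum3 !big_cons big_nil addr0 addrA. Qed.

Lemma sum3c (P : pred 'I_3) (F : 'I_3 -> int) : \sum_(j < 3 | P j) F j =
  (if P i0 then F i0 else 0) + (if P i1 then F i1 else 0) + (if P i2 then F i2 else 0).
Proof. by rewrite big_mkcond sum3. Qed.

Lemma prod3 (w : 'I_3 -> nat) : (\prod_(k < 3) w k = w i0 * w i1 * w i2)%N.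
Proof. by rewrite -big_enum /= enum3 !big_cons big_nil muln1 mulnA. Qed.

Lemma card_I2 (P : pred 'I_2) : #|P| = (P ord0 + P ord_max)%N.
Proof. by rewrite cardE /enum_mem -enumT enumI2 /= !unfold_in; case: (P _); case: (P _). Qed.

Lemma card_leg (P : pred leg) : #|P| =
  (P (inl ord0) + P (inl ord_max) + P (inr i0) + P (inr i1) + P (inr i2))%N.
Proof.
rewrite cardE /enum_mem -enumT enum_leg /= !unfold_in.
by case: (P (inl _)); case: (P (inl _)); case: (P (inr i0)); case: (P (inr i1));
  case: (P (inr i2)).
Qed.

Lemma card_as_sum (T : finType) (P : pred T) : #|P| = (\sum_(x : T) (P x : nat))%N.
Proof. by rewrite -sum1_card big_mkcond; apply: eq_bigr => x _; rewrite unfold_in; case: (P x). Qed.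

Lemma card1_eq (T : finType) (u v : T) : #|T| = 1%N -> u = v.
Proof. by move=> h; have /fintype_le1P := eq_leq h; apply. Qed.

Lemma card2_ex (T : finType) : #|T| = 2%N ->
  exists u v : T, u != v /\ forall z, z = u \/ z = v.
Proof.
rewrite cardT => h; have U := enum_uniq T; have mall := mem_enum T.
move: h U mall; case: (enum T) => [|e1 [|e2 [|e3 l]]] //= _.
rewrite ?inE andbT => n12 mall; exists e1, e2; split => // z.
by have := mall z; rewrite ?inE => /orP [/eqP ->|/eqP ->]; auto.
Qed.

Lemma card2_cover (T : finType) (u v : T) : #|T| = 2%N -> u != v ->
  forall z, z = u \/ z = v.
Proof.
move=> h uv z; have [e1 [e2 [_ H]]] := card2_ex h.
by case: (H u) uv => ->; case: (H v) => -> uv; rewrite ?eqxx // in uv; case: (H z) => ->; auto.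
Qed.

Lemma card3_third (T : finType) (x y : T) : #|T| = 3%N -> x != y ->
  exists z, [/\ z != x, z != y & forall v, v = x \/ v = y \/ v = z].
Proof.
rewrite cardT => h xy; have mx := mem_enum T x; have my := mem_enum T y.
have U := enum_uniq T; have mall := mem_enum T.
move: h mx my U mall; case: (enum T) => [|e1 [|e2 [|e3 [|e4 l]]]] //= _.
rewrite ?inE => mx my U mall.
move: U; rewrite ?inE !negb_or => /andP [/andP [n12 n13] /andP [n23 _]].
have n21 : e2 != e1 by rewrite eq_sym.
have n31 : e3 != e1 by rewrite eq_sym.
have n32 : e3 != e2 by rewrite eq_sym.
have cov v : v = e1 \/ v = e2 \/ v = e3.
  by have := mall v; rewrite ?inE => /orP [/eqP ->|/orP [/eqP ->|/eqP ->]]; auto.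
move: mx my; rewrite ?inE => /orP [/eqP ex|/orP [/eqP ex|/eqP ex]]
  /orP [/eqP ey|/orP [/eqP ey|/eqP ey]]; subst x y; rewrite ?eqxx // in xy;
  [exists e3 | exists e2 | exists e3 | exists e1 | exists e2 | exists e1];
  split => // v; case: (cov v) => [->|[->|->]]; auto.
Qed.

(** * Lattice vectors *)

Lemma lsum_fst (s : seq lat) : (lsum s).1 = \sum_(x <- s) x.1.
Proof. by elim: s => [|x s IH]; rewrite ?big_nil ?big_cons //= IH. Qed.

Lemma lsum_snd (s : seq lat) : (lsum s).2 = \sum_(x <- s) x.2.
Proof. by elim: s => [|x s IH]; rewrite ?big_nil ?big_cons //= IH. Qed.

Lemma prim_nz (u : lat) : primitive u -> u <> lzero.
Proof. by rewrite /primitive => /eqP H E; rewrite E in H. Qed.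

Lemma prim_neg (u : lat) : primitive u -> primitive (lscale (-1) u).
Proof. by rewrite /primitive /= !mulN1r !abszN. Qed.

Lemma prim_scale (k m : nat) (u v : lat) : (0 < k)%N -> primitive u -> primitive v ->
  lscale k%:Z u = lscale m%:Z v -> k = m /\ u = v.
Proof.
rewrite /primitive => kp /eqP pu /eqP pv [] E1 E2.
have Ekm : k = m.
  have := congr1 absz E1; have := congr1 absz E2; rewrite !abszM !absz_nat => F2 F1.
  have -> : k = gcdn (k * `|u.1|) (k * `|u.2|) by rewrite -muln_gcdr pu muln1.
  by rewrite F1 F2 -muln_gcdr pv muln1.
subst m; split => //; have kn : k%:Z != 0 by rewrite eqz_nat -lt0n.
by move: E1 E2; case: u {pu} => u1 u2; case: v {pv} => v1 v2 /= E1 E2;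
  rewrite (mulfI kn E1) (mulfI kn E2).
Qed.

Lemma prim_det_kernel (u y : lat) : primitive u -> det2 u y = 0 ->
  exists g : int, y = lscale g u.
Proof.
rewrite /primitive => /eqP pr; have [a [b Eab]] := Bezoutz u.1 u.2.
rewrite /gcdz pr in Eab; rewrite /det2 => /eqP; rewrite subr_eq0 => /eqP Ey.
exists (a * y.1 + b * y.2); case: y Ey => y1 y2 /= Ey; rewrite /lscale /=.
congr pair.
- transitivity ((a * u.1 + b * u.2) * y1); first by rewrite Eab mul1r.
  have -> : (a * y1 + b * y2) * u.1 = a * u.1 * y1 + b * (u.1 * y2) by ring.
  by rewrite Ey; ring.
- transitivity ((a * u.1 + b * u.2) * y2); first by rewrite Eab mul1r.
  have -> : (a * u.1 + b * u.2) * y2 = a * (u.1 * y2) + b * u.2 * y2 by ring.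
  by rewrite Ey; ring.
Qed.

Lemma prim_det_one (u : lat) : primitive u -> exists v : lat, det2 u v = 1.
Proof.
rewrite /primitive => /eqP pr; have [a [b Eab]] := Bezoutz u.1 u.2.
rewrite /gcdz pr in Eab; exists (- b, a); rewrite /det2 /= -[RHS]Eab; ring.
Qed.

(* If the sublattice [L] spanned by the rays is the kernel of
   [x |-> det2 u x mod del] for a primitive [u], then [N/L = Z/del], so the
   order of [G] is [|del|]. *)
Lemma orderG_det (D : 'I_3 -> lat) (u : lat) (del : int) (g : nat) :
  primitive u -> del != 0 -> (forall x, inL D x <-> (del %| det2 u x)%Z) ->
  orderG D g -> g = `|del|%N.
Proof.
move=> pu delnz HL [reps [rinj rsurj]].
have detB x y : det2 u (ladd x (lscale (-1) y)) = det2 u x - det2 u y.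
  by rewrite /det2 /=; ring.
have res_lt x : (`|(det2 u x %% del)%Z| < `|del|)%N.
  by rewrite -ltz_nat gez0_abs ?modz_ge0 ?ltz_mod.
pose f (i : 'I_g) : 'I_`|del| := Ordinal (res_lt (reps i)).
have finj : injective f.
  move=> i j /(congr1 val) /= /eqP; rewrite -eqz_nat !gez0_abs ?modz_ge0 // => /eqP Em.
  by apply: rinj; apply/HL; rewrite detB -eqz_mod_dvd Em.
have [v Ev] := prim_det_one pu.
have fsurj (r : 'I_`|del|) : r \in codom f.
  have detr : det2 u (lscale r%:Z v) = r%:Z.
    by transitivity (r%:Z * det2 u v); [rewrite /det2 /=; ring | rewrite Ev mulr1].
  have [i /HL] := rsurj (lscale r%:Z v); rewrite detB -eqz_mod_dvd detr => /eqP Em.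
  apply/codomP; exists i; apply: val_inj => /=; apply/eqP.
  rewrite -eqz_nat gez0_abs ?modz_ge0 // -Em.
  have : r%:Z < `|del| by rewrite -abszE ltz_nat.
  move: (nat_of_ord r) => n hr.
  case: (ltrP 0 del) => hd.
  - by rewrite modz_small // -(gtr0_norm hd) hr.
  - by rewrite -modzN modz_small // -(ler0_norm hd) hr.
have := card_codom finj; rewrite card_ord => Ec.
apply/eqP; rewrite eqn_leq; apply/andP; split.
- by have := max_card (mem (codom f)); rewrite Ec card_ord.
- by rewrite -Ec -{1}(card_ord `|del|); apply: subset_leq_card; apply/subsetP => r _.
Qed.

(** * Consequences of the weight relation *)

Section WeightRelation.
Variables (D : 'I_3 -> lat) (w : 'I_3 -> nat).
Hypotheses (wpos : forall k, (0 < w k)%N)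
  (wgcd : gcdn (gcdn (w ord0) (w (lift ord0 ord0))) (w ord_max) = 1%N)
  (Dprim : forall k, primitive (D k)) (rel : weight_relation w D).

Local Notation W k := ((w k)%:Z).

Lemma weight_rel_x : W i0 * (D i0).1 + W i1 * (D i1).1 + W i2 * (D i2).1 = 0.
Proof. by move: rel; rewrite /weight_relation enum3 => /(congr1 fst) /=; rewrite addr0 addrA. Qed.

Lemma weight_rel_y : W i0 * (D i0).2 + W i1 * (D i1).2 + W i2 * (D i2).2 = 0.
Proof. by move: rel; rewrite /weight_relation enum3 => /(congr1 snd) /=; rewrite addr0 addrA. Qed.

(* Wedging the relation with [D i1], resp. [D i0]. *)
Lemma det_rel12 : W i2 * det2 (D i1) (D i2) = W i0 * det2 (D i0) (D i1).
Proof.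
apply/eqP; rewrite -subr_eq0; apply/eqP.
transitivity ((D i1).1 * (W i0 * (D i0).2 + W i1 * (D i1).2 + W i2 * (D i2).2)
  - (D i1).2 * (W i0 * (D i0).1 + W i1 * (D i1).1 + W i2 * (D i2).1)).
  by rewrite /det2; ring.
by rewrite weight_rel_x weight_rel_y; ring.
Qed.

Lemma det_rel20 : W i2 * det2 (D i2) (D i0) = W i1 * det2 (D i0) (D i1).
Proof.
apply/eqP; rewrite -subr_eq0; apply/eqP.
transitivity ((D i0).2 * (W i0 * (D i0).1 + W i1 * (D i1).1 + W i2 * (D i2).1)
  - (D i0).1 * (W i0 * (D i0).2 + W i1 * (D i1).2 + W i2 * (D i2).2)).
  by rewrite /det2; ring.
by rewrite weight_rel_x weight_rel_y; ring.
Qed.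

Lemma det_cyclic : exists del : int,
  [/\ det2 (D i0) (D i1) = W i2 * del, det2 (D i1) (D i2) = W i0 * del
    & det2 (D i2) (D i0) = W i1 * del].
Proof.
have Wnz : W i2 != 0 by rewrite eqz_nat -lt0n.
have cop : coprime (w i2) (gcdn (w i0) (w i1)) by rewrite /coprime gcdnC wgcd.
have H0 : (w i2 %| w i0 * `|det2 (D i0) (D i1)|)%N.
  apply/dvdnP; exists `|det2 (D i1) (D i2)|%N.
  by have := congr1 absz det_rel12; rewrite !abszM !absz_nat => <-; rewrite mulnC.
have H1 : (w i2 %| w i1 * `|det2 (D i0) (D i1)|)%N.
  apply/dvdnP; exists `|det2 (D i2) (D i0)|%N.
  by have := congr1 absz det_rel20; rewrite !abszM !absz_nat => <-; rewrite mulnC.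
have : (w i2 %| gcdn (w i0) (w i1) * `|det2 (D i0) (D i1)|)%N.
  by rewrite muln_gcdl dvdn_gcd H0 H1.
rewrite Gauss_dvdr // => dvd_w2.
have /dvdzP [del Edel] : (W i2 %| det2 (D i0) (D i1))%Z by [].
exists del; split; first by rewrite Edel mulrC.
- by apply: (mulfI Wnz); rewrite det_rel12 Edel; ring.
- by apply: (mulfI Wnz); rewrite det_rel20 Edel; ring.
Qed.

(* A common divisor of [w i1] and [w i2] divides [w i0 * D i0], hence [w i0]
   since [D i0] is primitive. *)
Lemma coprime_w12 : coprime (w i1) (w i2).
Proof.
set k := gcdn (w i1) (w i2).
have ck : coprime k (w i0) by rewrite /coprime /k gcdnC gcdnA /i0 /i1 /i2 wgcd.
have k1 : (k%:Z %| W i1)%Z by rewrite /dvdz unfold_in /= ?absz_nat dvdn_gcdl.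
have k2 : (k%:Z %| W i2)%Z by rewrite /dvdz unfold_in /= ?absz_nat dvdn_gcdr.
have d1 : (k%:Z %| W i0 * (D i0).1)%Z.
  have -> : W i0 * (D i0).1 = - (W i1 * (D i1).1 + W i2 * (D i2).1).
    by apply/eqP; rewrite -subr_eq0 opprK addrA weight_rel_x.
  by rewrite rpredN rpredD // dvdz_mulr.
have d2 : (k%:Z %| W i0 * (D i0).2)%Z.
  have -> : W i0 * (D i0).2 = - (W i1 * (D i1).2 + W i2 * (D i2).2).
    by apply/eqP; rewrite -subr_eq0 opprK addrA weight_rel_y.
  by rewrite rpredN rpredD // dvdz_mulr.
move: d1 d2; rewrite /dvdz !unfold_in /= !abszM !absz_nat !Gauss_dvdr // => d1 d2.
have /eqP pr := Dprim i0.
by rewrite /coprime -/k -dvdn1 -pr dvdn_gcd d1 d2.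
Qed.

Lemma inL_coords (x : lat) : inL D x <->
  exists c0 c1 c2 : int, x = (c0 * (D i0).1 + c1 * (D i1).1 + c2 * (D i2).1,
                             c0 * (D i0).2 + c1 * (D i1).2 + c2 * (D i2).2).
Proof.
split.
- case=> c ->; exists (c i0), (c i1), (c i2).
  by rewrite enum3 /= /ladd /lscale /lzero /=; congr pair; ring.
- case=> c0 [c1] [c2] ->.
  exists (fun k => if k == i0 then c0 else if k == i1 then c1 else c2).
  by rewrite enum3 /= /ladd /lscale /lzero /=; congr pair; ring.
Qed.

(* The sublattice spanned by the rays is [{x | del divides det2 (D i0) x}]:
   one inclusion is [det_cyclic]; conversely subtract a combination of
   [D i1], [D i2] (Bezout for the coprime [w i1], [w i2]) to land in the
   kernel [Z (D i0)] of [det2 (D i0)]. *)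
Lemma inL_det (del : int) : det2 (D i0) (D i1) = W i2 * del ->
  det2 (D i2) (D i0) = W i1 * del ->
  forall x, inL D x <-> (del %| det2 (D i0) x)%Z.
Proof.
move=> E01 E20 x; rewrite inL_coords; split.
  case=> c0 [c1] [c2] ->; apply/dvdzP; exists (c1 * W i2 - c2 * W i1).
  transitivity (c1 * det2 (D i0) (D i1) - c2 * det2 (D i2) (D i0)).
    by rewrite /det2 /=; ring.
  by rewrite E01 E20; ring.
case/dvdzP => m Em; have [u [v Euv]] := Bezoutz (W i2) (W i1).
have G : gcdz (W i2) (W i1) = 1.
  by rewrite /gcdz !absz_nat gcdnC; have /eqP -> := coprime_w12.
rewrite G in Euv.
set y := (x.1 - m * u * (D i1).1 + m * v * (D i2).1,
          x.2 - m * u * (D i1).2 + m * v * (D i2).2).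
have /(prim_det_kernel (Dprim i0)) [g Eg] : det2 (D i0) y = 0.
  transitivity (det2 (D i0) x - m * u * det2 (D i0) (D i1) - m * v * det2 (D i2) (D i0)).
    by rewrite /det2 /y /=; ring.
  rewrite Em E01 E20; transitivity (m * del * (1 - (u * W i2 + v * W i1))); first by ring.
  by rewrite Euv subrr !mulr0.
exists g, (m * u), (- (m * v)).
move: Eg; rewrite /y /lscale; case: x {Em y} => x1 x2 /= [] E1 E2.
by congr pair; [rewrite -E1 | rewrite -E2]; ring.
Qed.

End WeightRelation.

(** * Cones of the fan in N_R *)

Section Cones.
Variables (R : realFieldType) (D : 'I_3 -> lat) (w : 'I_3 -> nat) (del : int).
Hypotheses (wpos : forall k, (0 < w k)%N) (rel : weight_relation w D)
  (E01 : det2 (D i0) (D i1) = (w i2)%:Z * del)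
  (E12 : det2 (D i1) (D i2) = (w i0)%:Z * del)
  (E20 : det2 (D i2) (D i0) = (w i1)%:Z * del)
  (delnz : del != 0).

Local Notation wR k := ((w k)%:R : R).
Local Notation dR := (del%:~R : R).

Definition Dr (j : 'I_3) : R * R := (((D j).1)%:~R, ((D j).2)%:~R).
Definition detR (x y : R * R) : R := x.1 * y.2 - x.2 * y.1.

(* [x = t D_b - s D_a] with [s, t > 0]: the displacement between the ends of
   two legs [q + s D_a] and [q + t D_b] leaving a common vertex [q]. *)
Definition cone_rep (a b : 'I_3) (s t : R) (x : R * R) : Prop :=
  0 < s /\ 0 < t /\ x = (t * (Dr b).1 - s * (Dr a).1, t * (Dr b).2 - s * (Dr a).2).

(* The side of the line [R D_j] on which [x] lies, normalized by the sign of
   [del], and the orientation of an ordered pair of rays. *)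
Definition side (x : R * R) (j : 'I_3) : R := detR x (Dr j) * dR.
Definition orient (a b : 'I_3) : R := detR (Dr b) (Dr a) * dR.

Lemma dR_neq0 : dR != 0.
Proof. by rewrite intr_eq0. Qed.

Lemma orient_swap a b : orient a b = - orient b a.
Proof. by rewrite /orient /detR; ring. Qed.

Lemma orient_cyclic :
  [/\ orient i1 i0 = wR i2 * dR ^+ 2, orient i2 i1 = wR i0 * dR ^+ 2
    & orient i0 i2 = wR i1 * dR ^+ 2].
Proof.
have detR_Dr a b : detR (Dr a) (Dr b) = (det2 (D a) (D b))%:~R.
  by rewrite /detR /det2 /= intrB !intrM.
by rewrite /orient !detR_Dr E01 E12 E20 !intrM; split; rewrite -mulrA -expr2.
Qed.

Lemma orient_pos :
  [/\ 0 < orient i1 i0, 0 < orient i2 i1 & 0 < orient i0 i2].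
Proof.
have sq : 0 < dR ^+ 2 by rewrite exprn_even_gt0 ?dR_neq0.
have [-> -> ->] := orient_cyclic; by split; rewrite mulr_gt0 // ltr0n.
Qed.

Lemma orient_neq0 a b : a != b -> orient a b != 0.
Proof.
have [p10 p21 p02] := orient_pos.
have [->|[->|->]] := ord3P a; have [->|[->|->]] := ord3P b => // _.
all: try by rewrite gt_eqF.
all: by rewrite orient_swap oppr_eq0 gt_eqF.
Qed.

Lemma side_rel x : wR i0 * side x i0 + wR i1 * side x i1 + wR i2 * side x i2 = 0.
Proof.
have toR (z : int) : z = 0 -> (z%:~R : R) = 0 by move=> ->.
have rx := toR _ (weight_rel_x rel); have ry := toR _ (weight_rel_y rel).
rewrite !intrD !intrM /= in rx ry.
transitivity (dR * (x.1 * ((w i0)%:~R * (Dr i0).2 + (w i1)%:~R * (Dr i1).2 + (w i2)%:~R * (Dr i2).2)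
  - x.2 * ((w i0)%:~R * (Dr i0).1 + (w i1)%:~R * (Dr i1).1 + (w i2)%:~R * (Dr i2).1))).
  by rewrite /side /detR /Dr /= -!natz !pmulrn; ring.
by rewrite rx ry; ring.
Qed.

Lemma cone_rep_side a b s t x : cone_rep a b s t x ->
  side x a = t * orient a b /\ side x b = s * orient a b.
Proof. by case=> _ [_ ->]; rewrite /side /orient /detR /=; split; ring. Qed.

Lemma cone_rep_of_side a b x : orient a b != 0 ->
  0 < side x b / orient a b -> 0 < side x a / orient a b ->
  cone_rep a b (side x b / orient a b) (side x a / orient a b) x.
Proof.
move=> o_nz hs ht; do 2 (split => //).
have det_nz : detR (Dr b) (Dr a) != 0 by apply: contra_neq o_nz; rewrite /orient => ->; rewrite mul0r.
move: det_nz; rewrite /side /orient /detR; case: x {hs ht} => x1 x2 /= det_nz.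
by congr pair; field; rewrite det_nz dR_neq0.
Qed.

Lemma ratio_gt0 (u v : R) : 0 < u * v -> 0 < u / v.
Proof.
move=> h; have vnz : v != 0 by apply: contraTneq h => ->; rewrite mulr0 ltxx.
have -> : u / v = (u * v) / (v ^+ 2) by rewrite expr2; field.
by rewrite divr_gt0 // exprn_even_gt0.
Qed.

Definition cone_of (x : R * R) : 'I_3 * 'I_3 :=
  if 0 < side x i0 then
    if 0 < side x i1 then (i1, i0) else if 0 < side x i2 then (i0, i2) else (i1, i2)
  else
    if 0 < side x i1 then (if 0 < side x i2 then (i2, i1) else (i2, i0)) else (i0, i1).

(* The coefficients of the decoded cone, as dictated by [cone_rep_side]. *)
Definition cone_s (x : R * R) : R := side x (cone_of x).2 / orient (cone_of x).1 (cone_of x).2.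
Definition cone_t (x : R * R) : R := side x (cone_of x).1 / orient (cone_of x).1 (cone_of x).2.

Lemma cone_of_rep x : (forall j, side x j != 0) ->
  (cone_of x).1 != (cone_of x).2 /\ cone_rep (cone_of x).1 (cone_of x).2 (cone_s x) (cone_t x) x.
Proof.
move=> gen; have [p10 p21 p02] := orient_pos.
have sgn j : 0 < side x j \/ side x j < 0.
  by have := gen j; case: ltrgtP; auto.
have pos_pp (u v : R) : 0 < u -> 0 < v -> 0 < u / v by move=> hu hv; rewrite divr_gt0.
have pos_nn (u v : R) : u < 0 -> v < 0 -> 0 < u / v.
  by move=> hu hv; apply: ratio_gt0; rewrite (nmulr_rgt0 _ hu).
rewrite /cone_s /cone_t /cone_of.
case: (sgn i0) => h0; [rewrite h0 | rewrite (lt_gtF h0)];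
case: (sgn i1) => h1; rewrite ?h1 ?(lt_gtF h1) /=;
try (case: (sgn i2) => h2; rewrite ?h2 ?(lt_gtF h2) /=);
(split; [by [] | apply: cone_rep_of_side; rewrite ?orient_neq0 //]);
rewrite ?(orient_swap i0 i1) ?(orient_swap i1 i2) ?(orient_swap i2 i0);
by [apply: pos_pp | apply: pos_nn; rewrite // oppr_lt0].
Qed.

Lemma cone_rep_cone_of a b s t x : a != b -> cone_rep a b s t x -> cone_of x = (a, b).
Proof.
move=> ab rep; have [hs [ht _]] := rep; have [Ea Eb] := cone_rep_side rep.
have [p10 p21 p02] := orient_pos; have wp k : 0 < wR k by rewrite ltr0n.
have rl := side_rel x; have w0 := wp i0; have w1 := wp i1; have w2 := wp i2.
rewrite /cone_of.
have [Ha|[Ha|Ha]] := ord3P a; have [Hb|[Hb|Hb]] := ord3P b; subst a b => //;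
  rewrite ?(orient_swap i0 i1) ?(orient_swap i1 i2) ?(orient_swap i2 i0) in Ea Eb.
- have h0 : side x i0 < 0 by rewrite Ea mulrN oppr_lt0 mulr_gt0.
  have h1 : side x i1 < 0 by rewrite Eb mulrN oppr_lt0 mulr_gt0.
  by rewrite (lt_gtF h0) (lt_gtF h1).
- have h0 : 0 < side x i0 by rewrite Ea mulr_gt0.
  have h2 : 0 < side x i2 by rewrite Eb mulr_gt0.
  have h1 : side x i1 < 0 by nra.
  by rewrite h0 (lt_gtF h1) h2.
- have h1 : 0 < side x i1 by rewrite Ea mulr_gt0.
  have h0 : 0 < side x i0 by rewrite Eb mulr_gt0.
  by rewrite h0 h1.
- have h1 : side x i1 < 0 by rewrite Ea mulrN oppr_lt0 mulr_gt0.
  have h2 : side x i2 < 0 by rewrite Eb mulrN oppr_lt0 mulr_gt0.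
  have h0 : 0 < side x i0 by nra.
  by rewrite h0 (lt_gtF h1) (lt_gtF h2).
- have h2 : side x i2 < 0 by rewrite Ea mulrN oppr_lt0 mulr_gt0.
  have h0 : side x i0 < 0 by rewrite Eb mulrN oppr_lt0 mulr_gt0.
  have h1 : 0 < side x i1 by nra.
  by rewrite (lt_gtF h0) h1 (lt_gtF h2).
- have h2 : 0 < side x i2 by rewrite Ea mulr_gt0.
  have h1 : 0 < side x i1 by rewrite Eb mulr_gt0.
  have h0 : side x i0 < 0 by nra.
  by rewrite (lt_gtF h0) h1 h2.
Qed.

Lemma cone_rep_unique a b s t a' b' s' t' x : a != b -> a' != b' ->
  cone_rep a b s t x -> cone_rep a' b' s' t' x -> [/\ a' = a, b' = b, s' = s & t' = t].
Proof.
move=> ab ab' rep rep'.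
have := cone_rep_cone_of ab' rep'; rewrite (cone_rep_cone_of ab rep) => -[Ea Eb]; subst a' b'.
have [Ea Eb] := cone_rep_side rep; have [Ea' Eb'] := cone_rep_side rep'.
have onz := orient_neq0 ab.
by split => //; apply: (mulIf onz); [rewrite -Eb' -Eb | rewrite -Ea' -Ea].
Qed.

End Cones.

(** * Balancing in coordinates *)

Lemma lsum_filter_fst (T : finType) (P : pred T) (f : T -> lat) :
  (lsum [seq f x | x <- enum T & P x]).1 = \sum_(x | P x) (f x).1.
Proof. by rewrite lsum_fst big_map big_filter big_enum_cond. Qed.

Lemma lsum_filter_snd (T : finType) (P : pred T) (f : T -> lat) :
  (lsum [seq f x | x <- enum T & P x]).2 = \sum_(x | P x) (f x).2.
Proof. by rewrite lsum_snd big_map big_filter big_enum_cond. Qed.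

Section Flux.
Variables (R : realFieldType) (D : 'I_3 -> lat) (w : 'I_3 -> nat) (d : nat) (C : tcurve R).

Definition edge_dir (e : tE C) (v : tV C) : lat :=
  if tsrc e == v then tu e else lscale (-1) (tu e).

(* The flux at [v]: compact edges plus exterior markings (interior markings
   have weight 0 and do not contribute). *)
Lemma flux_fst v : (flux D w d v).1 =
  \sum_(e | incid e v) (tw e)%:Z * (edge_dir e v).1 +
  \sum_(j < 3 | tleg C (inr j) == v) (d * w j)%N%:Z * (D j).1.
Proof.
rewrite /flux /= !lsum_filter_fst big_sumType /=.
by congr (_ + _); rewrite big1 ?add0r // => i _; exact: mul0r.
Qed.

Lemma flux_snd v : (flux D w d v).2 =
  \sum_(e | incid e v) (tw e)%:Z * (edge_dir e v).2 +
  \sum_(j < 3 | tleg C (inr j) == v) (d * w j)%N%:Z * (D j).2.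
Proof.
rewrite /flux /= !lsum_filter_snd big_sumType /=.
by congr (_ + _); rewrite big1 ?add0r // => i _; exact: mul0r.
Qed.

End Flux.

(** * The tripod curve *)

Definition shift (R : realFieldType) (q : R * R) (r : R) (u : R * R) : R * R :=
  (q.1 + r * u.1, q.2 + r * u.2).

(* Sink vertex [i0] at [q] carrying the third exterior marking, joined to
   [i1 = q + s D_a] (markings [P1] and [D_a]) and [i2 = q + t D_b]
   (markings [P2] and [D_b]) by edges of weights [d w_a] and [d w_b]. *)
Definition tripod (R : realFieldType) (D : 'I_3 -> lat) (w : 'I_3 -> nat) (d : nat)
    (a b : 'I_3) (q : R * R) (s t : R) : tcurve R :=
  @TCurve R 'I_3 'I_2 (fun _ => i0) (fun e => if e == ord0 then i1 else i2)
    (fun e => if e == ord0 then (d * w a)%N else (d * w b)%N)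
    (fun e => if e == ord0 then D a else D b)
    (fun v => if v == i0 then q
              else if v == i1 then shift q s (Dr R D a) else shift q t (Dr R D b))
    (fun l => match l with
              | inl i => if i == ord0 then i1 else i2
              | inr j => if j == a then i1 else if j == b then i2 else i0 end).

Lemma absz_eq_opp (x y : int) : x = y \/ x = - y -> absz x = absz y.
Proof. by case=> ->; rewrite ?abszN. Qed.

(* [|det(D_a, D_b)| = w_c |del|] for the third index [c], so an integer equal
   to [+- (d w_a) (d w_b) det(D_a, D_b)] has absolute value [|del| w_0 w_1 w_2 d^2]. *)
Lemma pair_index (D : 'I_3 -> lat) (w : 'I_3 -> nat) (d : nat) (del : int) (a b : 'I_3)
    (x : int) :
  det2 (D i0) (D i1) = (w i2)%:Z * del -> det2 (D i1) (D i2) = (w i0)%:Z * del ->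
  det2 (D i2) (D i0) = (w i1)%:Z * del -> a != b ->
  (x = (d * w a)%N%:Z * (d * w b)%N%:Z * det2 (D a) (D b) \/
   x = - ((d * w a)%N%:Z * (d * w b)%N%:Z * det2 (D a) (D b))) ->
  absz x = (`|del| * (\prod_(k < 3) w k) * d ^ 2)%N.
Proof.
move=> E01 E12 E20 + Ex; rewrite prod3 (absz_eq_opp Ex).
have swap u v : det2 u v = - det2 v u by rewrite /det2; ring.
have [->|[->|->]] := ord3P a; have [->|[->|->]] := ord3P b => // _;
  rewrite ?E01 ?E12 ?E20 ?(swap (D i1) (D i0)) ?(swap (D i2) (D i1)) ?(swap (D i0) (D i2))
    ?E01 ?E12 ?E20 ?mulrN ?abszN !abszM !absz_nat; ring.
Qed.

Section Tripod.
Variables (R : realFieldType) (D : 'I_3 -> lat) (w : 'I_3 -> nat) (d : nat).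
Variables (a b : 'I_3) (q : R * R) (s t : R).
Hypothesis ab : a != b.

Local Notation C := (tripod D w d a b q s t).

Lemma tripod_tree : is_tree C.
Proof.
have to_i0 (v : 'I_3) : connect (tadj (C:=C)) v i0.
  have [->|[->|->]] := ord3P v; first exact: connect0;
    apply: connect1; apply/existsP; by [exists ord0 | exists ord_max].
have from_i0 (v : 'I_3) : connect (tadj (C:=C)) i0 v.
  have [->|[->|->]] := ord3P v; first exact: connect0;
    apply: connect1; apply/existsP; by [exists ord0 | exists ord_max].
apply/andP; split; first (apply/andP; split).
- by apply/forallP => e; have [->|->] := ord2P e.
- by rewrite /= !card_ord.
- by apply/forallP => u; apply/forallP => v; exact: connect_trans (to_i0 u) (from_i0 v).
Qed.

Lemma tripod_valence (v : tV C) : (3 <= valence v)%N.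
Proof.
rewrite /valence card_I2 card_leg; move: ab.
by have [->|[->|->]] := ord3P a; have [->|[->|->]] := ord3P b => //;
  have [->|[->|->]] := ord3P v.
Qed.

Hypotheses (wpos : forall k, (0 < w k)%N) (d_pos : (1 <= d)%N)
  (Dprim : forall k, primitive (D k)) (rel : weight_relation w D).

Lemma tripod_balanced (v : tV C) : flux D w d v = lzero.
Proof.
have r1 := weight_rel_x rel; have r2 := weight_rel_y rel.
apply: injective_projections; rewrite ?flux_fst ?flux_snd big_mkcond sum2 sum3c /=; move: ab;
  have [->|[->|->]] := ord3P a; have [->|[->|->]] := ord3P b => // _;
  have [->|[->|->]] := ord3P v => /=;
  first [ ring
        | by rewrite -(mulr0 d%:Z) -[in RHS]r1; ring
        | by rewrite -(mulr0 d%:Z) -[in RHS]r2; ring ].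
Qed.

Lemma tripod_in_Tq : 0 < s -> 0 < t ->
  in_Tq D w d (shift q s (Dr R D a)) (shift q t (Dr R D b)) C.
Proof.
move=> hs ht; have dw j : (0 < d * w j)%N by rewrite muln_gt0 d_pos wpos.
split; first exact: tripod_tree.
split; first exact: tripod_valence.
split.
  move=> e; rewrite /edge_ok /=.
  by have [->|->] := ord2P e => /=; rewrite -[(_ == 0)%N]negbK -lt0n dw /=;
    split => //; [exists s | exists t].
split; first exact: tripod_balanced.
do 2 (split; first by []).
rewrite /pos_valence card_I2 card_leg /=; move: ab.
by have [->|[->|->]] := ord3P a; have [->|[->|->]] := ord3P b => //= _; rewrite !dw.
Qed.


(* The multiplicity computation: for any choice of sink, [zeta] of the
   tripod is a volume form times [+- (d w_x) (d w_y) det(D_x, D_y)] for two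
   distinct rays [x], [y]; its coefficient of degree 1 vanishes by balancing. *)
Lemma tripod_index (del : int) (v : tV C) :
  det2 (D i0) (D i1) = (w i2)%:Z * del -> det2 (D i1) (D i2) = (w i0)%:Z * del ->
  det2 (D i2) (D i0) = (w i1)%:Z * del ->
  has_index (zeta_sink D w d v) (`|del| * (\prod_(k < 3) w k) * d ^ 2)%N.
Proof.
move=> E01 E12 E20; have r1 := weight_rel_x rel; have r2 := weight_rel_y rel.
rewrite /zeta_sink card_ord /=; move: ab.
have [->|[->|->]] := ord3P a; have [->|[->|->]] := ord3P b => // _;
  have [->|[->|->]] := ord3P v; rewrite /= !enum_leg !enumI2 /=;
  cbv [has_index mprod ell wedge contract det2 lscale ladd lzero lsum lam1 vol foldr
       map fst snd l0 l1 l2];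
  (split; [apply: injective_projections => /= | split; [ring | split;
          [apply: injective_projections => /=; ring | ]]]).
all: try first [ by rewrite -(mulr0 d%:Z) -[in RHS]r1; ring
               | by rewrite -(mulr0 d%:Z) -[in RHS]r2; ring ].
all: first [ by apply: (@pair_index D w d del i0 i1) => //; rewrite /det2;
                first [left; ring | right; ring]
           | by apply: (@pair_index D w d del i1 i2) => //; rewrite /det2;
                first [left; ring | right; ring]
           | by apply: (@pair_index D w d del i2 i0) => //; rewrite /det2;
                first [left; ring | right; ring] ].
Qed.


End Tripod.

(** * Curves in T(q) are tripods *)

(* Each compact edge contributes 2 to the total valence, each of the five
   markings 1. *)
Lemma valence_sum (R : realFieldType) (C : tcurve R) : (forall e : tE C, tsrc e != ttgt e) ->
  (\sum_(v : tV C) valence v = 2 * #|tE C| + 5)%N.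
Proof.
move=> nl; rewrite /valence big_split /=; congr (_ + _)%N.
- under eq_bigr do rewrite card_as_sum.
  rewrite exchange_big /= mulnC -sum_nat_const; apply: eq_bigr => e _.
  rewrite -(card_as_sum [pred v | incid e v]).
  have := cards2 (tsrc e) (ttgt e); rewrite nl => <-.
  by apply: eq_card => v; rewrite !inE /incid (eq_sym v) (eq_sym v).
- under eq_bigr do rewrite card_as_sum.
  rewrite exchange_big /= (eq_bigr (fun _ => 1%N)) ?sum1_card ?card_sum ?card_ord // => l _.
  rewrite -(card_as_sum [pred v | tleg C l == v]) -(card1 (tleg C l)).
  by apply: eq_card => v; rewrite !inE eq_sym.
Qed.

Lemma tree_size (R : realFieldType) (C : tcurve R) : is_tree C ->
  (forall v : tV C, 3 <= valence v)%N -> (#|tE C| <= 2)%N /\ #|tV C| = (#|tE C|).+1.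
Proof.
case/andP => /andP [/forallP nl /eqP ce] _ val.
have : (\sum_(v : tV C) 3 <= \sum_(v : tV C) valence v)%N by apply: leq_sum => v _; exact: val.
by rewrite valence_sum // sum_nat_const -ce => H; split => //; lia.
Qed.

Definition dx (R : realFieldType) (p1 p2 : R * R) : R * R := (p2.1 - p1.1, p2.2 - p1.2).

Section Classification.
Variables (R : realFieldType) (D : 'I_3 -> lat) (w : 'I_3 -> nat) (d : nat) (p1 p2 : R * R).
Hypotheses (wpos : forall k, (0 < w k)%N) (d_pos : (1 <= d)%N)
  (Dprim : forall k, primitive (D k)) (rel : weight_relation w D).
Hypothesis gen : forall j, detR (dx p1 p2) (Dr R D j) != 0.
Variable C : tcurve R.
Hypothesis HC : in_Tq D w d p1 p2 C.

Local Notation wR k := ((w k)%:R : R).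
Local Notation y j := (detR (dx p1 p2) (Dr R D j)).

Definition joins (e : tE C) (u v : tV C) : Prop :=
  (tsrc e = u /\ ttgt e = v) \/ (tsrc e = v /\ ttgt e = u).

Lemma joins_sym e u v : joins e u v -> joins e v u.
Proof. by rewrite /joins; tauto. Qed.

Lemma joins_incid e u v : joins e u v -> incid e u.
Proof. by rewrite /incid; case=> [[-> _]|[_ ->]]; rewrite eqxx ?orbT. Qed.

Lemma joins_ends e u v : joins e u v -> forall r, incid e r -> r = u \/ r = v.
Proof. by case=> [[Es Et]|[Es Et]] r; rewrite /incid Es Et => /orP [/eqP <-|/eqP <-]; auto. Qed.

Lemma p1_neq_p2 : p1 <> p2.
Proof. by move=> E; have := gen i0; rewrite /detR /dx E !subrr !mul0r subrr eqxx. Qed.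

Lemma legs_pos : tpos (tleg C mP1) = p1 /\ tpos (tleg C mP2) = p2.
Proof. by have [_ [_ [_ [_ [h1 [h2 _]]]]]] := HC. Qed.

Lemma no_loop (e : tE C) : tsrc e != ttgt e.
Proof. by case: HC => /andP [/andP [/forallP nl _] _] _. Qed.

Lemma partial_sum_nonparallel (b0 b1 b2 : bool) : ~~ [&& b0, b1 & b2] -> [|| b0, b1 | b2] ->
  (if b0 then wR i0 * y i0 else 0) + (if b1 then wR i1 * y i1 else 0) +
  (if b2 then wR i2 * y i2 else 0) != 0.
Proof.
have wnz k : wR k * y k != 0 by rewrite mulf_neq0 ?gen // pnatr_eq0 -lt0n.
have yrel : wR i0 * y i0 + wR i1 * y i1 + wR i2 * y i2 = 0.
  have toR (z : int) : z = 0 -> (z%:~R : R) = 0 by move=> ->.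
  have rx := toR _ (weight_rel_x rel); have ry := toR _ (weight_rel_y rel).
  rewrite !intrD !intrM /= in rx ry.
  transitivity ((dx p1 p2).1 * ((w i0)%:~R * (Dr R D i0).2 + (w i1)%:~R * (Dr R D i1).2
      + (w i2)%:~R * (Dr R D i2).2) - (dx p1 p2).2 * ((w i0)%:~R * (Dr R D i0).1
      + (w i1)%:~R * (Dr R D i1).1 + (w i2)%:~R * (Dr R D i2).1)).
    by rewrite /detR !pmulrn; ring.
  by rewrite rx ry; ring.
move: (wnz i0) (wnz i1) (wnz i2) yrel.
set A := wR i0 * y i0; set B := wR i1 * y i1; set E := wR i2 * y i2 => hA hB hE yr.
by case: b0; case: b1; case: b2 => //= _ _; apply/eqP => H;
  first [move/eqP: hA; apply; lra | move/eqP: hB; apply; lra | move/eqP: hE; apply; lra].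
Qed.

Lemma leaf_balance (u : tV C) (e : tE C) : (forall e', incid e' u -> e' = e) -> incid e u ->
  (tw e)%:Z * (edge_dir e u).1 + d%:Z * (\sum_(j < 3 | tleg C (inr j) == u) (w j)%:Z * (D j).1) = 0 /\
  (tw e)%:Z * (edge_dir e u).2 + d%:Z * (\sum_(j < 3 | tleg C (inr j) == u) (w j)%:Z * (D j).2) = 0.
Proof.
move=> only iu; have [_ [_ [_ [bal _]]]] := HC.
have P1 : [pred e' | incid e' u] =1 pred1 e by move=> e'; apply/idP/eqP => [/only|->].
split; [have := congr1 fst (bal u); rewrite flux_fst | have := congr1 snd (bal u); rewrite flux_snd];
  rewrite (big_pred1 e P1) => H; apply: etrans H; rewrite big_distrr /=;
  by congr (_ + _); apply: eq_bigr => j _; rewrite PoszM mulrA.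
Qed.

Lemma leaf_dir_parallel (u : tV C) (e : tE C) : (forall e', incid e' u -> e' = e) ->
  incid e u -> (0 < tw e)%N ->
  det2 (tu e) (\sum_(j < 3 | tleg C (inr j) == u) (w j)%:Z * (D j).1,
               \sum_(j < 3 | tleg C (inr j) == u) (w j)%:Z * (D j).2) = 0.
Proof.
move=> only iu twp; have [F1 F2] := leaf_balance only iu.
set s1 := \sum_(j < 3 | _) _ in F1 *; set s2 := \sum_(j < 3 | _) _ in F2 *.
have twnz : (tw e)%:Z != 0 by rewrite eqz_nat -lt0n.
have : (tw e)%:Z * det2 (edge_dir e u) (s1, s2) = 0.
  transitivity (((tw e)%:Z * (edge_dir e u).1 + d%:Z * s1) * s2
              - ((tw e)%:Z * (edge_dir e u).2 + d%:Z * s2) * s1); first by rewrite /det2 /=; ring.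
  by rewrite F1 F2 !mul0r subrr.
move/eqP; rewrite mulf_eq0 (negbTE twnz) /= /edge_dir; case: (tsrc e == u) => /eqP //.
by rewrite /det2 /= => H; rewrite -oppr0 -H; ring.
Qed.

(* An edge cannot join the vertices of [P1] and [P2] if one of them is a leaf:
   [p2 - p1] would be parallel to a partial sum of weighted rays. *)
Lemma leaf_between_markings (e : tE C) (u v : tV C) : joins e u v ->
  (u = tleg C mP1 /\ v = tleg C mP2) \/ (u = tleg C mP2 /\ v = tleg C mP1) ->
  (forall e', incid e' u -> e' = e) -> False.
Proof.
move=> Je Huv only; have iu := joins_incid Je.
have [P1e P2e] := legs_pos; have [_ [_ [eok _]]] := HC.
have := eok e; rewrite /edge_ok; case: ifP => [/eqP tw0 Epos | twn [prim [tau [_ Epos]]]].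
  apply: p1_neq_p2; rewrite -P1e -P2e.
  by case: Huv => -[<- <-]; case: Je => -[Es Et]; rewrite -Es -Et Epos.
have twp : (0 < tw e)%N by rewrite lt0n twn.
have Z := leaf_dir_parallel only iu twp.
have [F1 F2] := leaf_balance only iu.
have [c Ec] : exists c : R, dx p1 p2 = (c * ((tu e).1)%:~R, c * ((tu e).2)%:~R).
  rewrite /dx -P1e -P2e; case: Huv => -[<- <-]; case: Je => -[<- <-]; rewrite Epos /=;
    first [by exists tau; congr pair; ring | by exists (- tau); congr pair; ring].
set s1 := \sum_(j < 3 | _) _ in Z F1; set s2 := \sum_(j < 3 | _) _ in Z F2.
have detS : detR (dx p1 p2) (s1%:~R, s2%:~R) = 0.
  rewrite Ec /detR /=; transitivity (c * (det2 (tu e) (s1, s2))%:~R); last by rewrite Z mulr0.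
  by rewrite /det2 /= intrB !intrM; ring.
have tunz := prim_nz prim; have twnz : (tw e)%:Z != 0 by rewrite eqz_nat twn.
have dir0 : (edge_dir e u).1 = 0 -> (edge_dir e u).2 = 0 -> False.
  move: tunz; rewrite /edge_dir; case: (tsrc e == u); case: (tu e) => t1 t2 /= tunz h1 h2;
    apply: tunz; move: h1 h2; rewrite ?mulN1r => /eqP; rewrite ?oppr_eq0 => /eqP -> /eqP;
    by rewrite ?oppr_eq0 => /eqP ->.
have r1 := weight_rel_x rel; have r2 := weight_rel_y rel.
move: detS F1 F2; rewrite /s1 /s2 !sum3c.
case E0 : (tleg C (inr i0) == u); case E1 : (tleg C (inr i1) == u);
  case E2 : (tleg C (inr i2) == u) => /= detS F1 F2.
- apply: dir0; apply: (mulfI twnz); rewrite mulr0; [rewrite -[RHS]F1 r1 | rewrite -[RHS]F2 r2];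
    ring.
all: try (have := partial_sum_nonparallel (b0 := tleg C (inr i0) == u)
    (b1 := tleg C (inr i1) == u) (b2 := tleg C (inr i2) == u);
  rewrite E0 E1 E2 => /(_ isT isT) /eqP; apply;
  rewrite -[RHS]detS /detR /Dr /dx /= ?intrD ?intrM ?mulr0z; ring).
apply: dir0; apply: (mulfI twnz); rewrite mulr0; [rewrite -[RHS]F1 | rewrite -[RHS]F2]; ring.
Qed.

Lemma leaf_marked (e : tE C) (u z : tV C) (a : 'I_3) : joins e u z ->
  (forall e', incid e' u -> e' = e) -> (forall j, (tleg C (inr j) == u) = (j == a)) ->
  tw e = (d * w a)%N /\ exists s, 0 < s /\ tpos u = shift (tpos z) s (Dr R D a).
Proof.
move=> Je only marks; have iu := joins_incid Je.
have [F1 F2] := leaf_balance only iu.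
have Pa : [pred j | tleg C (inr j) == u] =1 pred1 a by move=> j; rewrite /= marks.
rewrite (big_pred1 a Pa) in F1; rewrite (big_pred1 a Pa) in F2.
have dwz : ((d * w a)%N)%:Z != 0 by rewrite eqz_nat muln_eq0 negb_or -!lt0n d_pos wpos.
have twp : (0 < tw e)%N.
  rewrite lt0n; apply/negP => /eqP tw0; apply: (prim_nz (Dprim a)).
  rewrite tw0 mul0r add0r in F1; rewrite tw0 mul0r add0r in F2.
  case: (D a) F1 F2 => a1 a2 /= F1 F2.
  by congr pair; apply: (mulfI dwz); rewrite mulr0 PoszM -mulrA; [rewrite F1 | rewrite F2].
have [_ [_ [eok _]]] := HC.
have := eok e; rewrite /edge_ok -[(tw e == 0)%N]negbK -lt0n twp /= => -[prim [tau [htau Epos]]].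
have pdir : primitive (edge_dir e u) by rewrite /edge_dir; case: ifP; [|move=> _; apply: prim_neg].
have L : lscale (tw e)%:Z (edge_dir e u) = lscale (d * w a)%N%:Z (lscale (-1) (D a)).
  by rewrite /lscale /=; congr pair; apply/eqP; rewrite -subr_eq0 ?PoszM;
    [rewrite -[X in _ == X]F1 | rewrite -[X in _ == X]F2]; apply/eqP; ring.
have [Etw Edir] := prim_scale twp pdir (prim_neg (Dprim a)) L.
split => //; exists tau; split => //.
case: Je => -[Es Et].
- move: Edir Epos; rewrite /edge_dir Es Et eqxx => -> ->.
  by rewrite /shift /Dr /= !mulN1r !intrN; case: (tpos u) => u1 u2 /=; congr pair; ring.
- have zu : (z == u) = false by apply/negbTE; have := no_loop e; rewrite Es Et.
  move: Edir Epos; rewrite /edge_dir Es Et zu => Edir ->.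
  have -> : tu e = D a.
    by case: (tu e) (D a) Edir => t1 t2 [a1 a2] /= [] /eqP; rewrite !mulN1r eqr_opp => /eqP ->
      /eqP; rewrite eqr_opp => /eqP ->.
  by [].
Qed.

Definition tripod_like (a b : 'I_3) (q : R * R) (s t : R) : Prop :=
  exists (z : tV C) (ex ey : tE C) (c : 'I_3),
  [/\ tleg C mP1 != tleg C mP2, tleg C mP1 != z & tleg C mP2 != z] /\
  (forall v, v = tleg C mP1 \/ v = tleg C mP2 \/ v = z) /\ #|tV C| = 3%N /\
  ex != ey /\ (forall e, e = ex \/ e = ey) /\ #|tE C| = 2%N /\
  joins ex z (tleg C mP1) /\ joins ey z (tleg C mP2) /\
  [/\ tleg C (inr a) = tleg C mP1, tleg C (inr b) = tleg C mP2 & tleg C (inr c) = z] /\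
  tw ex = (d * w a)%N /\ tw ey = (d * w b)%N /\ tpos z = q /\
  tpos (tleg C mP1) = shift q s (Dr R D a) /\ tpos (tleg C mP2) = shift q t (Dr R D b).

Lemma not_isolated (v u : tV C) : u != v -> exists e, incid e v.
Proof.
move=> uv; have [/andP [_ /forallP con] _] := HC.
have /forallP /(_ u) /connectP [[|h p] /= pth lst] := con v; first by rewrite lst eqxx in uv.
move/andP: pth => [/existsP [e He] _]; exists e.
by move: He => /orP [/andP [/eqP <- _]|/andP [_ /eqP <-]]; rewrite /incid eqxx ?orbT.
Qed.

Lemma marking_at (v : tV C) (k : nat) : (#|[pred e | incid e v]| <= k)%N ->
  (k + (tleg C mP1 == v) + (tleg C mP2 == v) < 3)%N -> exists j, tleg C (inr j) = v.
Proof.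
move=> hk hs; have [_ [val _]] := HC; have := val v; rewrite /valence card_leg /=.
case E0 : (tleg C (inr i0) == v); first by exists i0; apply/eqP.
case E1 : (tleg C (inr i1) == v); first by exists i1; apply/eqP.
case E2 : (tleg C (inr i2) == v); first by exists i2; apply/eqP.
by move: hs hk; rewrite /mP1 /mP2; case: (tleg C (inl _) == v); case: (tleg C (inl _) == v)
  => /= hs hk; lia.
Qed.

Lemma only_edge_card (v : tV C) (e : tE C) : (forall e', incid e' v -> e' = e) ->
  (#|[pred e' | incid e' v]| <= 1)%N.
Proof.
move=> H; rewrite -(card1 e); apply: subset_leq_card; apply/subsetP => e'.
by rewrite !inE => /H ->.
Qed.

(* A path [P1 -- z -- P2] with two edges is a tripod: the two ends are leaves
   carrying one exterior marking each, the third marking sits at [z]. *)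
Lemma path_tripod_like (z : tV C) (ex ey : tE C) :
  tleg C mP1 != tleg C mP2 -> z != tleg C mP1 -> z != tleg C mP2 ->
  (forall v, v = tleg C mP1 \/ v = tleg C mP2 \/ v = z) -> #|tV C| = 3%N ->
  ex != ey -> (forall e, e = ex \/ e = ey) -> #|tE C| = 2%N ->
  joins ex (tleg C mP1) z -> joins ey (tleg C mP2) z ->
  exists a b s t, 0 < s /\ 0 < t /\ tripod_like a b (tpos z) s t.
Proof.
set x := tleg C mP1; set y := tleg C mP2 => xy zx zy cov Vc exy Eall Ec Jx Jy.
have xz : x != z by rewrite eq_sym.
have yz : y != z by rewrite eq_sym.
have yx : y != x by rewrite eq_sym.
have onlyx e' : incid e' x -> e' = ex.
  case: (Eall e') => // -> ie'.
  by case: (joins_ends Jy ie') => E; rewrite E eqxx in xy xz.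
have onlyy e' : incid e' y -> e' = ey.
  case: (Eall e') => // -> ie'.
  by case: (joins_ends Jx ie') => E; rewrite E eqxx in yx yz.
have [a Ha] : exists a, tleg C (inr a) = x.
  by apply: (marking_at (only_edge_card onlyx)); rewrite eqxx (negbTE yx).
have [b Hb] : exists b, tleg C (inr b) = y.
  by apply: (marking_at (only_edge_card onlyy)); rewrite eqxx (negbTE xy).
have [c Hc] : exists c, tleg C (inr c) = z.
  by apply: (@marking_at z 2); [rewrite -Ec; apply: max_card | rewrite (negbTE xz) (negbTE yz)].
have ab : a != b by apply: contra_neq xy => E; rewrite -Ha -Hb E.
have ac : a != c by apply: contra_neq xz => E; rewrite -Ha -Hc E.
have bc : b != c by apply: contra_neq yz => E; rewrite -Hb -Hc E.
have cv := cover3 ab ac bc.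
have Lx j : (tleg C (inr j) == x) = (j == a).
  case: (cv j) => [->|[->|->]]; rewrite ?eqxx ?Ha ?Hb ?Hc ?eqxx //.
  - by rewrite (negbTE yx) eq_sym (negbTE ab).
  - by rewrite eq_sym (negbTE xz) eq_sym (negbTE ac).
have Ly j : (tleg C (inr j) == y) = (j == b).
  case: (cv j) => [->|[->|->]]; rewrite ?eqxx ?Ha ?Hb ?Hc ?eqxx //.
  - by rewrite (negbTE xy) (negbTE ab).
  - by rewrite eq_sym (negbTE yz) eq_sym (negbTE bc).
have [twx [s [hs Px]]] := leaf_marked Jx onlyx Lx.
have [twy [t [ht Py]]] := leaf_marked Jy onlyy Ly.
exists a, b, s, t; do 2 split => //; exists z, ex, ey, c.
by do 6 split => //; do 2 (split; first exact: joins_sym).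
Qed.

Lemma sole_edge (e e' : tE C) (r u v : tV C) : (forall f, f = e \/ f = e') ->
  joins e' u v -> r != u -> r != v -> forall f, incid f r -> f = e.
Proof.
move=> Ef Je' ru rv f; case: (Ef f) => // Ee; subst f => /(joins_ends Je') [] E;
  by rewrite E eqxx in ru rv.
Qed.

(* Two edges joining the same pair of vertices would isolate a third one. *)
Lemma double_edge_absurd (e1 e2 : tE C) (r u v : tV C) : (forall f, f = e1 \/ f = e2) ->
  r != u -> r != v -> joins e1 u v -> joins e2 u v -> False.
Proof.
move=> Eall ru rv J1 J2; have [e ie] := not_isolated (v := r) (u := u) (ltac:(by rewrite eq_sym)).
by case: (Eall e) => Ee; subst e; [case: (joins_ends J1 ie) | case: (joins_ends J2 ie)]
  => E; rewrite E eqxx in ru rv.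
Qed.

Lemma markings_apart : tleg C mP1 != tleg C mP2.
Proof. by have [P1e P2e] := legs_pos; apply/eqP => E; apply: p1_neq_p2; rewrite -P1e -P2e E. Qed.

(* With two edges on the three vertices [x = P1], [y = P2], [z], an edge
   [x -- y] makes [x] or [y] a leaf, excluded by [leaf_between_markings], and
   two edges on the same pair isolate a vertex: only [x -- z -- y] remains. *)
Lemma two_edges_tripod_like : #|tE C| = 2%N -> #|tV C| = 3%N ->
  exists a b q s t, 0 < s /\ 0 < t /\ tripod_like a b q s t.
Proof.
move=> E2 Vc3; have [e1 [e2 [n12 Eall]]] := card2_ex E2.
have Eall' e : e = e2 \/ e = e1 by case: (Eall e); auto.
have xy := markings_apart; set x := tleg C mP1 in xy *; set y := tleg C mP2 in xy *.
have [z [zx zy cov]] := card3_third Vc3 xy.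
have yx : y != x by rewrite eq_sym.
have xz : x != z by rewrite eq_sym.
have yz : y != z by rewrite eq_sym.
have joins_some e : joins e x y \/ joins e x z \/ joins e y z.
  have := no_loop e; rewrite /joins.
  by case: (cov (tsrc e)) => [->|[->|->]]; case: (cov (ttgt e)) => [->|[->|->]];
    rewrite ?eqxx //; tauto.
have [J1|[J1|J1]] := joins_some e1; have [J2|[J2|J2]] := joins_some e2.
- by case: (double_edge_absurd Eall zx zy J1 J2).
- case: (leaf_between_markings (joins_sym J1)); first by right.
  exact: sole_edge Eall J2 _ _.
- case: (leaf_between_markings J1); first by left.
  exact: sole_edge Eall J2 _ _.
- case: (leaf_between_markings (joins_sym J2)); first by right.
  exact: sole_edge Eall' J1 _ _.
- by case: (double_edge_absurd Eall yx yz J1 J2).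
- have [a [b [s [t [hs [ht H]]]]]] := path_tripod_like xy zx zy cov Vc3 n12 Eall E2 J1 J2.
  by exists a, b, (tpos z), s, t.
- case: (leaf_between_markings J2); first by left.
  exact: sole_edge Eall' J1 _ _.
- have n21 : e2 != e1 by rewrite eq_sym.
  have [a [b [s [t [hs [ht H]]]]]] := path_tripod_like xy zx zy cov Vc3 n21 Eall' E2 J2 J1.
  by exists a, b, (tpos z), s, t.
- by case: (double_edge_absurd Eall xy xz J1 J2).
Qed.

(* Every curve of [T(q)] has the shape of a tripod: by the valence count it
   has at most two edges; a single vertex is impossible as [p1 != p2], and a
   single edge joins the two (leaf) vertices of [P1] and [P2]. *)
Lemma in_Tq_tripod_like : exists a b q s t, 0 < s /\ 0 < t /\ tripod_like a b q s t.
Proof.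
have [tree [val _]] := HC; have [Eb Vc] := tree_size tree val.
have xy := markings_apart.
move: Eb; rewrite leq_eqVlt ltnS leq_eqVlt ltnS leqn0 => /orP [/eqP E2|/orP [/eqP E1|/eqP E0]].
- by apply: two_edges_tripod_like; rewrite // Vc E2.
- have [e _] : exists e, e \in tE C by apply/card_gt0P; rewrite E1.
  have Vc2 : #|tV C| = 2%N by rewrite Vc E1.
  have only e' : incid e' (tleg C mP1) -> e' = e by move=> _; apply: card1_eq.
  case: (leaf_between_markings (e := e) _ (or_introl (conj erefl erefl)) only).
  have cv := card2_cover Vc2 (no_loop e).
  by case: (cv (tleg C mP1)) => Ex; case: (cv (tleg C mP2)) => Ey;
    rewrite ?Ex ?Ey ?eqxx // in xy *; [left | right].
- by move/negP: xy; case; apply/eqP; apply: card1_eq; rewrite Vc E0.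
Qed.

End Classification.

(** * Uniqueness up to isomorphism *)

Lemma tripod_iso (R : realFieldType) (D : 'I_3 -> lat) (w : 'I_3 -> nat) (d : nat)
    (C : tcurve R) (a b : 'I_3) (q : R * R) (s t : R) :
  tripod_like D w d C a b q s t -> tc_iso (tripod D w d a b q s t) C.
Proof.
case=> z [ex [ey [c [[xy xz yz] [cov [Vc [exy [Eall [Ec [Jx [Jy [[La Lb Lc]
  [twx [twy [Pz [Px Py]]]]]]]]]]]]]]]].
have ab : a != b by apply: contra_neq xy => E; rewrite -La -Lb E.
have ac : a != c by apply: contra_neq xz => E; rewrite -La -Lc E.
have bc : b != c by apply: contra_neq yz => E; rewrite -Lb -Lc E.
pose f (v : 'I_3) := if v == i0 then z else if v == i1 then tleg C mP1 else tleg C mP2.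
pose g (e : 'I_2) := if e == ord0 then ex else ey.
have finj : injective f.
  move=> u v; have [->|[->|->]] := ord3P u; have [->|[->|->]] := ord3P v;
    rewrite /f /= => // E; by rewrite E eqxx in xy xz yz.
have ginj : injective g.
  move=> u v; have [->|->] := ord2P u; have [->|->] := ord2P v;
    rewrite /g /= => // E; by rewrite E eqxx in exy.
exists f, g; split; first by apply: inj_card_bij => //; rewrite Vc card_ord.
split; first by apply: inj_card_bij => //; rewrite Ec card_ord.
split.
  by move=> e; have [->|->] := ord2P e; rewrite /g /f /=;
    [case: Jx | case: Jy] => -[-> ->]; [left | right | left | right].
split; first by move=> e; have [->|->] := ord2P e.
split; first by move=> v; have [->|[->|->]] := ord3P v.
case=> [i|j] /=; first by have [->|->] := ord2P i.
have [->|[->|->]] := cover3 ab ac bc j; rewrite /f ?eqxx.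
- by rewrite La.
- by rewrite [b == a]eq_sym (negbTE ab) Lb.
- by rewrite [c == a]eq_sym (negbTE ac) [c == b]eq_sym (negbTE bc) Lc.
Qed.

Lemma shift_cone_rep (R : realFieldType) (D : 'I_3 -> lat) (a b : 'I_3) (q p1 p2 : R * R)
    (s t : R) :
  0 < s -> 0 < t -> p1 = shift q s (Dr R D a) -> p2 = shift q t (Dr R D b) ->
  cone_rep D a b s t (dx p1 p2).
Proof. by move=> hs ht -> ->; do 2 split => //; rewrite /dx /shift /=; congr pair; ring. Qed.

Lemma cone_rep_shift (R : realFieldType) (D : 'I_3 -> lat) (a b : 'I_3) (p1 p2 : R * R)
    (s t : R) :
  cone_rep D a b s t (dx p1 p2) ->
  p1 = shift (shift p1 (- s) (Dr R D a)) s (Dr R D a) /\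
  p2 = shift (shift p1 (- s) (Dr R D a)) t (Dr R D b).
Proof.
case=> _ [_]; rewrite /dx /shift; case: p1 => u1 u2; case: p2 => v1 v2 /= [E1 E2].
by split; congr pair; lra.
Qed.

Lemma shift_inj (R : realFieldType) (q q' u : R * R) (r : R) :
  shift q r u = shift q' r u -> q = q'.
Proof. by case: q q' => [q1 q2] [q1' q2'] [] /addIr -> /addIr ->. Qed.

Lemma tripod_like_ends (R : realFieldType) (D : 'I_3 -> lat) (w : 'I_3 -> nat) (d : nat)
    (C : tcurve R) (a b : 'I_3) (q : R * R) (s t : R) :
  tripod_like D w d C a b q s t ->
  [/\ a != b, tpos (tleg C mP1) = shift q s (Dr R D a) & tpos (tleg C mP2) = shift q t (Dr R D b)].
Proof.
case=> z [ex [ey [c [[xy _ _] [_ [_ [_ [_ [_ [_ [_ [[La Lb _] [_ [_ [_ [Px Py]]]]]]]]]]]]]]]].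
by split => //; apply: contra_neq xy => E; rewrite -La -Lb E.
Qed.

(** * Genericity *)

(* [(p1, p2)] lies on [ray_hyp j] iff [p2 - p1] is parallel to [D_j]. *)
Definition ray_hyp (R : realFieldType) (D : 'I_3 -> lat) (j : 'I_3) : hyperplane R :=
  Hyp (- ((D j).2)%:~R, ((D j).1)%:~R) (((D j).2)%:~R, - ((D j).1)%:~R) 0.

Lemma ray_hyp_proper (R : realFieldType) (D : 'I_3 -> lat) (j : 'I_3) :
  primitive (D j) -> hyp_proper (ray_hyp R D j).
Proof.
move=> pj; rewrite /hyp_proper /ray_hyp /= => -[] /eqP; rewrite oppr_eq0 intr_eq0 => /eqP E2.
move=> /eqP; rewrite intr_eq0 => /eqP E1 _ _; apply: (prim_nz pj).
by case: (D j) E1 E2 => u1 u2 /= -> ->.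
Qed.

Lemma off_ray_hyp (R : realFieldType) (D : 'I_3 -> lat) (j : 'I_3) (p1 p2 : R * R) :
  off_hyp (ray_hyp R D j) p1 p2 -> detR (dx p1 p2) (Dr R D j) != 0.
Proof. by move=> off; apply/eqP => E; apply: off; rewrite /= -E /detR /dx /Dr /=; ring. Qed.

Lemma in_Tq_iso_tripod (R : realFieldType) (D : 'I_3 -> lat) (w : 'I_3 -> nat) (d : nat)
    (del : int) (p1 p2 : R * R) (a b : 'I_3) (s t : R) (C : tcurve R) :
  (forall k, 0 < w k)%N -> (1 <= d)%N -> (forall k, primitive (D k)) -> weight_relation w D ->
  det2 (D i0) (D i1) = (w i2)%:Z * del -> det2 (D i1) (D i2) = (w i0)%:Z * del ->
  det2 (D i2) (D i0) = (w i1)%:Z * del -> del != 0 ->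
  (forall j, detR (dx p1 p2) (Dr R D j) != 0) ->
  a != b -> cone_rep D a b s t (dx p1 p2) -> in_Tq D w d p1 p2 C ->
  tc_iso (tripod D w d a b (shift p1 (- s) (Dr R D a)) s t) C.
Proof.
move=> wpos d_pos Dprim rel E01 E12 E20 delnz gen ab rep HC.
have [a' [b' [q' [s' [t' [hs' [ht' shape]]]]]]] := in_Tq_tripod_like wpos d_pos Dprim rel gen HC.
have [ab' P1' P2'] := tripod_like_ends shape; have [P1e P2e] := legs_pos HC.
have rep' : cone_rep D a' b' s' t' (dx p1 p2).
  by apply: (shift_cone_rep hs' ht'); [rewrite -P1e P1' | rewrite -P2e P2'].
have [Ea Eb Es Et] := cone_rep_unique wpos rel E01 E12 E20 delnz ab ab' rep rep'.
subst a' b' s' t'; have [Ep1 _] := cone_rep_shift rep.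
have <- : q' = shift p1 (- s) (Dr R D a).
  by apply: (@shift_inj _ _ _ (Dr R D a) s); rewrite -P1' P1e; exact: Ep1.
exact: tripod_iso.
Qed.

Unset Implicit Arguments.

Theorem proposition5p2 (R : realFieldType) (D : 'I_3 -> lat) (w : 'I_3 -> nat) (d : nat) :
  (forall k, 0 < w k)%N ->
  gcdn (gcdn (w ord0) (w (lift ord0 ord0))) (w ord_max) = 1%N ->
  (forall k, primitive (D k)) ->
  weight_relation w D ->
  rays_span D ->
  (1 <= d)%N ->
  exists bad : seq (hyperplane R),
    (forall H, In_seq H bad -> hyp_proper H) /\
    forall p1 p2 : R * R, (forall H, In_seq H bad -> off_hyp H p1 p2) ->
      exists C : tcurve R,
        in_Tq D w d p1 p2 C /\
        (forall C' : tcurve R, in_Tq D w d p1 p2 C' -> tc_iso C C') /\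
        (forall g : nat, orderG D g ->
           forall s : tV C, has_index (zeta_sink D w d s) (g * (\prod_(k < 3) w k) * d ^ 2)%N).
Proof.
move=> wpos wgcd Dprim rel span d_pos.
have [del [E01 E12 E20]] := det_cyclic wpos wgcd rel.
have delnz : del != 0 by apply: contraNneq span => d0; rewrite /rays_span -/i0 -/i1 E01 d0 mulr0.
exists [:: ray_hyp R D i0; ray_hyp R D i1; ray_hyp R D i2]; split.
  by move=> H [->|[->|[->|[]]]]; apply: ray_hyp_proper.
move=> p1 p2 off.
have gen j : detR (dx p1 p2) (Dr R D j) != 0.
  by apply: off_ray_hyp; apply: off; have [->|[->|->]] := ord3P j; rewrite /=; auto.
have [a [b [s [t [ab rep]]]]] : exists a b s t, a != b /\ cone_rep D a b s t (dx p1 p2).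
  have side_gen j : side D del (dx p1 p2) j != 0 by rewrite mulf_neq0 ?gen ?intr_eq0.
  by have [ab rep] := cone_of_rep wpos E01 E12 E20 delnz side_gen; do 4 eexists; eauto.
have [Ep1 Ep2] := cone_rep_shift rep; have [hs [ht _]] := rep.
exists (tripod D w d a b (shift p1 (- s) (Dr R D a)) s t); split.
  by rewrite {1}Ep1 {1}Ep2; apply: tripod_in_Tq.
split; first by move=> C' HC'; apply: (in_Tq_iso_tripod wpos d_pos Dprim rel E01 E12 E20 delnz gen ab rep).
move=> g Hg v; rewrite (orderG_det (Dprim i0) delnz (inL_det wgcd Dprim rel E01 E20) Hg).
exact: tripod_index.
Qed.
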